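(* Let $\alpha\in\mathbb{C}$ with $\Re(\alpha)>-1/2$. Then for every $n\in\mathbb{N}_0$ the function $p_n(x;\alpha)$ is a polynomial in $x$ of exactly degree $n$. Moreover, for all $n\in\mathbb{N}_0$: (i) $p_{n+1}(x;\alpha)= x^2 p_n''(x;\alpha)-x(2x-1-2\alpha)p_n'(x;\alpha)-\big((2\alpha+1)x-\alpha^2\big)p_n(x;\alpha)$, where primes denote derivatives in $x$; (ii) $(2\alpha+1)\,x\,p_n(x;\alpha+1)=-p_{n+1}(x;\alpha)+\alpha^2 p_n(x;\alpha)$; (iii) $p_n(0;\alpha)=\alpha^{2n}$; (iv) $p_n(x;\alpha)=(-2)^n(\alpha+1/2)_n\,x^n+a_{n-1}(x)$ for some polynomial $a_{n-1}$ of degree at most $n-1$ (with $a_{-1}=0$).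
   Context: Let $\mathcal{A}$ be the Bessel-type differential operator acting on (analytic) functions of $x>0$ by $\mathcal{A}f(x)=-x^2f''(x)-xf'(x)+x^2f(x)$, and let $\mathcal{A}^n$ denote its $n$-th iterate ($\mathcal{A}^0$ = identity). For $\alpha\in\mathbb{C}$ and $n\in\mathbb{N}_0$ define, for $x>0$, $p_n(x;\alpha)=(-1)^n e^{x}x^{-\alpha}\,\mathcal{A}^n\big(e^{-x}x^{\alpha}\big)$. The Pochhammer symbol is $(y)_0=1$, $(y)_n=\prod_{j=0}^{n-1}(y+j)$ for $n\ge1$. *)

From Stdlib Require Import Reals List ClassicalEpsilon.
Open Scope R_scope.

Definition Cplx : Type := (R * R)%type.
Definition RtoC (r : R) : Cplx := (r, 0).
Definition Czero : Cplx := RtoC 0.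
Definition Cone : Cplx := RtoC 1.
Definition Cadd (z w : Cplx) : Cplx := (fst z + fst w, snd z + snd w).
Definition Copp (z : Cplx) : Cplx := (- fst z, - snd z).
Definition Csub (z w : Cplx) : Cplx := Cadd z (Copp w).
Definition Cmul (z w : Cplx) : Cplx :=
  (fst z * fst w - snd z * snd w, fst z * snd w + snd z * fst w).
Fixpoint Cpow (z : Cplx) (n : nat) : Cplx :=
  match n with O => Cone | S k => Cmul z (Cpow z k) end.

(* principal power x^a = exp(a ln x) for real x > 0 and complex a *)
Definition Cpowr (x : R) (a : Cplx) : Cplx :=
  let m := exp (fst a * ln x) in (m * cos (snd a * ln x), m * sin (snd a * ln x)).

(* rderiv g x = g'(x) whenever g is differentiable at x (junk 0 otherwise) *)
Definition rderiv (g : R -> R) (x : R) : R :=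
  match excluded_middle_informative (exists l, derivable_pt_lim g x l) with
  | left H => proj1_sig (constructive_indefinite_description _ H)
  | right _ => 0
  end.
Definition Cderiv (f : R -> Cplx) (x : R) : Cplx :=
  (rderiv (fun t => fst (f t)) x, rderiv (fun t => snd (f t)) x).

Definition Aop (f : R -> Cplx) : R -> Cplx := fun x =>
  Cadd (Cadd (Copp (Cmul (RtoC (x ^ 2)) (Cderiv (Cderiv f) x)))
             (Copp (Cmul (RtoC x) (Cderiv f x))))
       (Cmul (RtoC (x ^ 2)) (f x)).

Definition Aiter (n : nat) (f : R -> Cplx) : R -> Cplx := Nat.iter n Aop f.

(* p_n(x; alpha) = (-1)^n e^x x^{-alpha} A^n (e^{-x} x^alpha), meaningful for x > 0 *)
Definition pn (n : nat) (alpha : Cplx) (x : R) : Cplx :=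
  Cmul (RtoC ((-1) ^ n * exp x))
    (Cmul (Cpowr x (Copp alpha))
       (Aiter n (fun y => Cmul (RtoC (exp (- y))) (Cpowr y alpha)) x)).

Fixpoint poch (y : Cplx) (n : nat) : Cplx :=
  match n with O => Cone | S k => Cmul (poch y k) (Cadd y (RtoC (INR k))) end.

(* ---------- polynomials: little-endian coefficient lists ---------- *)
Definition Peval (P : list Cplx) (z : Cplx) : Cplx :=
  fold_right (fun c acc => Cadd c (Cmul z acc)) Czero P.
Definition Pdeg_exact (P : list Cplx) (n : nat) : Prop :=
  length P = S n /\ last P Czero <> Czero.

(* Conjugating the operator by the weight w(x) = e^{-x} x^alpha turns A into a second-order
   operator with polynomial coefficients: A (w P) = - w L_alpha P, where
   L_alpha P = x^2 P'' - x (2x - 1 - 2 alpha) P' - ((2 alpha + 1) x - alpha^2) P.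
   Hence p_n = L_alpha^n 1, and everything is read off the coefficient recursion of L_alpha:
   L_alpha maps the monomial x^m to -(2 alpha + 2m + 1) x^(m+1) plus lower terms (degree and
   leading coefficient), its constant term is alpha^2 times that of P (value at 0), and
   L_alpha (x Q) = x L_(alpha+1) Q, which by induction gives the shift relation (ii). *)

From Stdlib Require Import Reals List Lra Lia ClassicalEpsilon FunctionalExtensionality.
Open Scope R_scope.
Import ListNotations.

Arguments Peval : simpl never.
Arguments Cpowr : simpl never.

Lemma Cplx_ext (z w : Cplx) : fst z = fst w -> snd z = snd w -> z = w.
Proof. destruct z, w; simpl; intros; subst; reflexivity. Qed.

Ltac Cring := apply Cplx_ext; simpl; ring.

Definition Cnorm2 (z : Cplx) : R := fst z * fst z + snd z * snd z.

Lemma Cnorm2_Cmul z w : Cnorm2 (Cmul z w) = Cnorm2 z * Cnorm2 w.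
Proof. unfold Cnorm2; simpl; ring. Qed.

Lemma Cnorm2_pos z : z <> Czero -> 0 < Cnorm2 z.
Proof.
  destruct z as [x y]; unfold Cnorm2; simpl; intro Hz.
  destruct (Req_dec x 0) as [->|Hx]; [destruct (Req_dec y 0) as [->|Hy]|].
  - now contradict Hz.
  - nra.
  - nra.
Qed.

Lemma Cmul_neq0 z w : z <> Czero -> w <> Czero -> Cmul z w <> Czero.
Proof.
  intros Hz Hw E.
  assert (Hzw : 0 < Cnorm2 (Cmul z w)).
  { rewrite Cnorm2_Cmul; apply Rmult_lt_0_compat; apply Cnorm2_pos; assumption. }
  rewrite E in Hzw; unfold Cnorm2 in Hzw; simpl in Hzw; lra.
Qed.

Lemma Cneq0_fst z : fst z <> 0 -> z <> Czero.
Proof. intros H E; rewrite E in H; simpl in H; lra. Qed.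

Lemma Cpow_neq0 z n : z <> Czero -> Cpow z n <> Czero.
Proof.
  intro Hz; induction n as [|n IH]; simpl.
  - apply Cneq0_fst; simpl; lra.
  - now apply Cmul_neq0.
Qed.

Lemma poch_neq0 y n : 0 < fst y -> poch y n <> Czero.
Proof.
  intro Hy; induction n as [|n IH]; simpl.
  - apply Cneq0_fst; simpl; lra.
  - apply Cmul_neq0; [assumption|].
    apply Cneq0_fst; simpl; pose proof (pos_INR n); lra.
Qed.

(** * Polynomials as coefficient lists *)

Fixpoint Padd (A B : list Cplx) : list Cplx :=
  match A, B with
  | [], _ => B
  | _, [] => A
  | a :: A', b :: B' => Cadd a b :: Padd A' B'
  end.

Definition Pscale (c : Cplx) (P : list Cplx) : list Cplx := map (Cmul c) P.

Fixpoint Pder (P : list Cplx) : list Cplx :=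
  match P with [] => [] | c :: Q => Padd Q (Czero :: Pder Q) end.

Definition Pfun (P : list Cplx) (t : R) : Cplx := Peval P (RtoC t).

Lemma Peval_nil z : Peval [] z = Czero.
Proof. reflexivity. Qed.

Lemma Peval_cons c Q z : Peval (c :: Q) z = Cadd c (Cmul z (Peval Q z)).
Proof. reflexivity. Qed.

Lemma Peval_Padd A B z : Peval (Padd A B) z = Cadd (Peval A z) (Peval B z).
Proof.
  revert B; induction A as [|a A IH]; intros [|b B]; simpl Padd;
    rewrite ?Peval_cons, ?IH; Cring.
Qed.

Lemma Peval_Pscale c P z : Peval (Pscale c P) z = Cmul c (Peval P z).
Proof.
  induction P as [|d Q IH]; [Cring|].
  change (Peval (Cmul c d :: Pscale c Q) z = Cmul c (Peval (d :: Q) z)).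
  rewrite !Peval_cons, IH; Cring.
Qed.

Lemma Peval_Pder_cons c Q z :
  Peval (Pder (c :: Q)) z = Cadd (Peval Q z) (Cmul z (Peval (Pder Q) z)).
Proof. simpl Pder; rewrite Peval_Padd, Peval_cons; Cring. Qed.

Lemma Peval_Pder_Padd A B z :
  Peval (Pder (Padd A B)) z = Cadd (Peval (Pder A) z) (Peval (Pder B) z).
Proof.
  revert B; induction A as [|a A IH]; intros [|b B]; simpl Padd;
    rewrite ?Peval_Pder_cons, ?Peval_Padd, ?Peval_nil, ?IH; try Cring.
Qed.

Lemma Peval_app P c z :
  Peval (P ++ [c]) z = Cadd (Peval P z) (Cmul c (Cpow z (length P))).
Proof.
  induction P as [|d P IH]; simpl app; rewrite ?Peval_cons.
  - Cring.
  - rewrite IH; simpl length; simpl Cpow; Cring.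
Qed.

Lemma length_removelast {A : Type} (P : list A) : length (removelast P) = (length P - 1)%nat.
Proof. induction P as [|c [|d Q] IH]; simpl in *; auto; rewrite IH; lia. Qed.

Lemma Peval_split_last P z : P <> [] ->
  Peval P z = Cadd (Cmul (last P Czero) (Cpow z (length P - 1))) (Peval (removelast P) z).
Proof.
  intro HP; rewrite (app_removelast_last Czero HP) at 1.
  rewrite Peval_app, length_removelast; Cring.
Qed.

Lemma length_Padd A B : length (Padd A B) = Nat.max (length A) (length B).
Proof. revert B; induction A as [|a A IH]; intros [|b B]; simpl; auto. Qed.

Lemma last_cons_ne {A : Type} (x : A) (L : list A) d : L <> [] -> last (x :: L) d = last L d.
Proof. destruct L; [congruence|reflexivity]. Qed.

Lemma last_Padd A : forall B d,
  (length A < length B)%nat -> last (Padd A B) d = last B d.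
Proof.
  induction A as [|a A IH]; intros [|b B] d Hlt; simpl in Hlt; try lia; [reflexivity|].
  change (last (Cadd a b :: Padd A B) d = last (b :: B) d).
  assert (HB : B <> []) by (destruct B; simpl in Hlt; [lia|discriminate]).
  assert (HAB : Padd A B <> []).
  { intro E; apply (f_equal (@length _)) in E; rewrite length_Padd in E.
    destruct B; simpl in *; [congruence|lia]. }
  rewrite !last_cons_ne by assumption; apply IH; lia.
Qed.

(** * The operator L_alpha on coefficient lists *)

(* Writing P = c + x Q, the recursion is L_a P = c (a^2 - (2a+1) x) + x L_(a+1) Q. *)
Fixpoint Pstep (a : Cplx) (P : list Cplx) : list Cplx :=
  match P with
  | [] => []
  | c :: Q => Padd [Cmul c (Cmul a a); Cmul c (Copp (Cadd (Cmul (RtoC 2) a) Cone))]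
                   (Czero :: Pstep (Cadd a Cone) Q)
  end.

Lemma Pstep_cons a c Q :
  Pstep a (c :: Q) =
  Padd [Cmul c (Cmul a a); Cmul c (Copp (Cadd (Cmul (RtoC 2) a) Cone))]
       (Czero :: Pstep (Cadd a Cone) Q).
Proof. reflexivity. Qed.

Lemma Peval_Pstep P : forall a z, Peval (Pstep a P) z =
  Csub (Csub (Cmul (Cmul z z) (Peval (Pder (Pder P)) z))
             (Cmul (Cmul z (Csub (Csub (Cmul (RtoC 2) z) Cone) (Cmul (RtoC 2) a)))
                   (Peval (Pder P) z)))
       (Cmul (Csub (Cmul (Cadd (Cmul (RtoC 2) a) Cone) z) (Cmul a a)) (Peval P z)).
Proof.
  induction P as [|c Q IH]; intros a z; [Cring|].
  rewrite Pstep_cons, Peval_Padd, !Peval_cons, IH, Peval_Pder_cons.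
  change (Pder (c :: Q)) with (Padd Q (Czero :: Pder Q)).
  rewrite Peval_Pder_Padd, Peval_Pder_cons, Peval_nil; Cring.
Qed.

Lemma Peval_Pstep_Padd A : forall B a z,
  Peval (Pstep a (Padd A B)) z = Cadd (Peval (Pstep a A) z) (Peval (Pstep a B) z).
Proof.
  induction A as [|c A IH]; intros [|d B] a z; try Cring.
  change (Padd (c :: A) (d :: B)) with (Cadd c d :: Padd A B).
  rewrite !Pstep_cons, !Peval_Padd, !Peval_cons, IH; Cring.
Qed.

Lemma Peval_Pstep_Pscale c P : forall a z,
  Peval (Pstep a (Pscale c P)) z = Cmul c (Peval (Pstep a P) z).
Proof.
  induction P as [|d Q IH]; intros a z; [Cring|].
  change (Pscale c (d :: Q)) with (Cmul c d :: Pscale c Q).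
  rewrite !Pstep_cons, !Peval_Padd, !Peval_cons, IH; Cring.
Qed.

Lemma Peval_Pstep_shift a P z :
  Peval (Pstep a (Czero :: P)) z = Cmul z (Peval (Pstep (Cadd a Cone) P) z).
Proof. rewrite Pstep_cons, Peval_Padd, !Peval_cons; Cring. Qed.

Lemma length_Pstep P : forall a, P <> [] -> length (Pstep a P) = S (length P).
Proof.
  induction P as [|c [|d Q] IH]; intros a HP; [congruence|reflexivity|].
  rewrite Pstep_cons, length_Padd; cbn [length].
  rewrite IH by discriminate; cbn [length]; lia.
Qed.

Lemma last_Pstep m : forall P a, length P = S m ->
  last (Pstep a P) Czero =
  Cmul (Copp (Cadd (Cmul (RtoC 2) a) (RtoC (2 * INR m + 1)))) (last P Czero).
Proof.
  induction m as [|m IH]; intros [|c Q] a HP; simpl in HP; try lia.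
  - destruct Q; [|discriminate]; simpl; Cring.
  - injection HP as HQ.
    assert (HQne : Q <> []) by (destruct Q; simpl in HQ; [lia|discriminate]).
    rewrite Pstep_cons, last_Padd
      by (cbn [length]; rewrite length_Pstep by assumption; lia).
    rewrite last_cons_ne
      by (intro E; apply (f_equal (@length _)) in E;
          rewrite length_Pstep in E by assumption; discriminate).
    rewrite IH by assumption; rewrite (last_cons_ne c Q) by assumption.
    rewrite S_INR; Cring.
Qed.

Definition Ppn (a : Cplx) (n : nat) : list Cplx := Nat.iter n (Pstep a) [Cone].

Lemma Ppn_S a n : Ppn a (S n) = Pstep a (Ppn a n).
Proof. reflexivity. Qed.

Lemma length_Ppn a n : length (Ppn a n) = S n.
Proof.
  induction n as [|n IH]; [reflexivity|].
  rewrite Ppn_S, length_Pstep, IH; [reflexivity|].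
  intro E; rewrite E in IH; discriminate.
Qed.

Lemma last_Ppn a n :
  last (Ppn a n) Czero = Cmul (Cpow (RtoC (-2)) n) (poch (Cadd a (RtoC (1 / 2))) n).
Proof.
  induction n as [|n IH]; [Cring|].
  rewrite Ppn_S, (last_Pstep n) by apply length_Ppn; rewrite IH; simpl Cpow; simpl poch.
  generalize (Cpow (RtoC (-2)) n) (poch (Cadd a (RtoC (1 / 2))) n); intros u v.
  apply Cplx_ext; simpl; field.
Qed.

Lemma Ppn_at0 a n : Peval (Ppn a n) Czero = Cpow a (2 * n).
Proof.
  induction n as [|n IH]; [Cring|].
  rewrite Ppn_S, Peval_Pstep, IH.
  replace (2 * S n)%nat with (S (S (2 * n))) by lia; simpl Cpow.
  generalize (Cpow a (2 * n)); intro u; unfold Czero; Cring.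
Qed.

(** * Complex-valued derivatives of a real variable *)

Definition Cderivable_lim (f : R -> Cplx) (x : R) (l : Cplx) : Prop :=
  derivable_pt_lim (fun t => fst (f t)) x (fst l) /\
  derivable_pt_lim (fun t => snd (f t)) x (snd l).

Lemma rderiv_eq g x l : derivable_pt_lim g x l -> rderiv g x = l.
Proof.
  intro H; unfold rderiv; destruct excluded_middle_informative as [E|E].
  - destruct constructive_indefinite_description as [l' Hl']; simpl.
    eapply uniqueness_limite; eassumption.
  - exfalso; apply E; eauto.
Qed.

Lemma derivable_pt_lim_eq_on_pos f g x l :
  (forall y, 0 < y -> f y = g y) -> 0 < x ->
  derivable_pt_lim f x l -> derivable_pt_lim g x l.
Proof.
  intros Hfg Hx; apply (derivable_pt_lim_locally_ext f g x 0 (x + 1)); [lra|].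
  intros z Hz; apply Hfg; lra.
Qed.

Lemma rderiv_eq_on_pos f g x :
  (forall y, 0 < y -> f y = g y) -> 0 < x -> rderiv f x = rderiv g x.
Proof.
  intros Hfg Hx; unfold rderiv at 1; destruct excluded_middle_informative as [E|E].
  - destruct constructive_indefinite_description as [l Hl]; simpl.
    symmetry; apply rderiv_eq; eapply derivable_pt_lim_eq_on_pos; eassumption.
  - unfold rderiv; destruct excluded_middle_informative as [[l Hl]|E']; [|reflexivity].
    exfalso; apply E; exists l.
    eapply derivable_pt_lim_eq_on_pos; [|exact Hx|exact Hl].
    intros; symmetry; auto.
Qed.

Lemma Cderiv_eq_on_pos f g x :
  (forall y, 0 < y -> f y = g y) -> 0 < x -> Cderiv f x = Cderiv g x.
Proof.
  intros Hfg Hx; unfold Cderiv.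
  f_equal; apply rderiv_eq_on_pos; auto; intros y Hy; rewrite Hfg; auto.
Qed.

Lemma Cderiv_eq f x l : Cderivable_lim f x l -> Cderiv f x = l.
Proof.
  intros [H1 H2]; unfold Cderiv; rewrite (rderiv_eq _ _ _ H1), (rderiv_eq _ _ _ H2).
  destruct l; reflexivity.
Qed.

Lemma Cderivable_lim_ext f g x l l' :
  (forall t, f t = g t) -> l = l' -> Cderivable_lim f x l -> Cderivable_lim g x l'.
Proof.
  intros Hfg <- Hf; replace g with f; [assumption|]; extensionality t; auto.
Qed.

Lemma Cderivable_lim_const c x : Cderivable_lim (fun _ => c) x Czero.
Proof. split; apply (derivable_pt_lim_const _ x). Qed.

Lemma Cderivable_lim_RtoC h x l :
  derivable_pt_lim h x l -> Cderivable_lim (fun t => RtoC (h t)) x (RtoC l).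
Proof. split; [assumption|apply (derivable_pt_lim_const 0 x)]. Qed.

Lemma Cderivable_lim_add f g x a b :
  Cderivable_lim f x a -> Cderivable_lim g x b ->
  Cderivable_lim (fun t => Cadd (f t) (g t)) x (Cadd a b).
Proof. intros [Hf1 Hf2] [Hg1 Hg2]; split; now apply derivable_pt_lim_plus. Qed.

Lemma Cderivable_lim_mul f g x a b :
  Cderivable_lim f x a -> Cderivable_lim g x b ->
  Cderivable_lim (fun t => Cmul (f t) (g t)) x (Cadd (Cmul a (g x)) (Cmul (f x) b)).
Proof.
  intros [Hf1 Hf2] [Hg1 Hg2]; split; simpl.
  - pose proof (derivable_pt_lim_minus _ _ _ _ _ (derivable_pt_lim_mult _ _ _ _ _ Hf1 Hg1)
                  (derivable_pt_lim_mult _ _ _ _ _ Hf2 Hg2)) as D.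
    match goal with |- derivable_pt_lim _ _ ?l => replace l with
      (fst a * fst (g x) + fst (f x) * fst b - (snd a * snd (g x) + snd (f x) * snd b))
      by ring end.
    exact D.
  - pose proof (derivable_pt_lim_plus _ _ _ _ _ (derivable_pt_lim_mult _ _ _ _ _ Hf1 Hg2)
                  (derivable_pt_lim_mult _ _ _ _ _ Hf2 Hg1)) as D.
    match goal with |- derivable_pt_lim _ _ ?l => replace l with
      (fst a * snd (g x) + fst (f x) * snd b + (snd a * fst (g x) + snd (f x) * fst b))
      by ring end.
    exact D.
Qed.

Lemma Cderivable_lim_Pfun P x : Cderivable_lim (Pfun P) x (Pfun (Pder P) x).
Proof.
  induction P as [|c Q IH]; [apply (Cderivable_lim_const Czero)|].
  eapply Cderivable_lim_ext; [| |apply (Cderivable_lim_add _ _ _ _ _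
    (Cderivable_lim_const c x)
    (Cderivable_lim_mul _ _ _ _ _ (Cderivable_lim_RtoC _ _ _ (derivable_pt_lim_id x)) IH))].
  - intro t; reflexivity.
  - unfold Pfun, id; rewrite Peval_Pder_cons; Cring.
Qed.

Lemma Cderiv_Pfun P x : Cderiv (Pfun P) x = Pfun (Pder P) x.
Proof. apply Cderiv_eq, Cderivable_lim_Pfun. Qed.

Lemma Cderiv_eq_on_pos_Pfun F P x :
  (forall y, 0 < y -> F y = Pfun P y) -> 0 < x -> Cderiv F x = Pfun (Pder P) x.
Proof. intros HF Hx; rewrite (Cderiv_eq_on_pos _ _ x HF Hx); apply Cderiv_Pfun. Qed.

(* Coefficient lists are not canonical (trailing zeros), so that L_a respects equality of
   polynomial functions is derived analytically, through Cderiv. *)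
Lemma Pfun_Pder_ext A B :
  (forall t, Pfun A t = Pfun B t) -> forall x, Pfun (Pder A) x = Pfun (Pder B) x.
Proof.
  intros HAB x; rewrite <- !Cderiv_Pfun; f_equal; extensionality t; apply HAB.
Qed.

Lemma Pfun_Pstep_ext a A B :
  (forall t, Pfun A t = Pfun B t) -> forall x, Pfun (Pstep a A) x = Pfun (Pstep a B) x.
Proof.
  intros HAB x; unfold Pfun; rewrite !Peval_Pstep.
  pose proof (Pfun_Pder_ext _ _ HAB) as H1.
  pose proof (Pfun_Pder_ext _ _ H1) as H2.
  unfold Pfun in *; rewrite HAB, H1, H2; reflexivity.
Qed.

Lemma Ppn_shift a n x :
  Cmul (Cmul (Cadd (Cmul (RtoC 2) a) Cone) (RtoC x)) (Pfun (Ppn (Cadd a Cone) n) x) =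
  Cadd (Copp (Pfun (Ppn a (S n)) x)) (Cmul (Cmul a a) (Pfun (Ppn a n) x)).
Proof.
  revert x; induction n as [|n IH]; intro x.
  - unfold Pfun; rewrite Ppn_S, Peval_Pstep; simpl; Cring.
  - set (b := Cadd (Cmul (RtoC 2) a) Cone) in *.
    set (X := Pscale b (Czero :: Ppn (Cadd a Cone) n)).
    set (Y := Padd (Pscale (Copp Cone) (Ppn a (S n))) (Pscale (Cmul a a) (Ppn a n))).
    assert (HXY : forall t, Pfun X t = Pfun Y t).
    { intro t; pose proof (IH t) as E; unfold X, Y, Pfun in *.
      rewrite Peval_Padd, !Peval_Pscale, Peval_cons.
      transitivity (Cmul (Cmul b (RtoC t)) (Peval (Ppn (Cadd a Cone) n) (RtoC t)));
        [Cring|rewrite E; Cring]. }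
    pose proof (Pfun_Pstep_ext a X Y HXY x) as E.
    unfold X, Y, Pfun in E |- *.
    rewrite Peval_Pstep_Pscale, Peval_Pstep_shift, Peval_Pstep_Padd,
      !Peval_Pstep_Pscale in E.
    rewrite !Ppn_S; rewrite !Ppn_S in E.
    transitivity (Cmul b (Cmul (RtoC x)
      (Peval (Pstep (Cadd a Cone) (Ppn (Cadd a Cone) n)) (RtoC x)))); [Cring|].
    rewrite E; Cring.
Qed.

Lemma continuity_pt_vanish_pos (h : R -> R) :
  continuity_pt h 0 -> (forall x, 0 < x -> h x = 0) -> h 0 = 0.
Proof.
  intros Hc Hpos; destruct (Req_dec (h 0) 0) as [E|E]; [assumption|exfalso].
  destruct (Hc _ (Rabs_pos_lt _ E)) as [d [Hd Hball]].
  assert (Hlt : Rabs (h (d / 2) - h 0) < Rabs (h 0)).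
  { apply Hball; split.
    - split; [exact I|lra].
    - simpl; unfold R_dist; rewrite Rminus_0_r, Rabs_right; lra. }
  rewrite Hpos, Rminus_0_l, Rabs_Ropp in Hlt by lra; lra.
Qed.

Lemma Peval_at0_of_vanish_pos D :
  (forall x, 0 < x -> Pfun D x = Czero) -> Peval D Czero = Czero.
Proof.
  intro HD; destruct (Cderivable_lim_Pfun D 0) as [D1 D2]; apply Cplx_ext.
  - apply (continuity_pt_vanish_pos (fun t => fst (Pfun D t))).
    + apply derivable_continuous_pt; eexists; exact D1.
    + intros x Hx; rewrite HD by assumption; reflexivity.
  - apply (continuity_pt_vanish_pos (fun t => snd (Pfun D t))).
    + apply derivable_continuous_pt; eexists; exact D2.
    + intros x Hx; rewrite HD by assumption; reflexivity.
Qed.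

Lemma Peval_at0_eq_on_pos P Q :
  (forall x, 0 < x -> Pfun P x = Pfun Q x) -> Peval P Czero = Peval Q Czero.
Proof.
  intro HPQ.
  assert (H0 : Peval (Padd P (Pscale (Copp Cone) Q)) Czero = Czero).
  { apply Peval_at0_of_vanish_pos; intros x Hx; unfold Pfun in *.
    rewrite Peval_Padd, Peval_Pscale, HPQ by assumption; Cring. }
  rewrite Peval_Padd, Peval_Pscale in H0.
  apply Cplx_ext; [apply (f_equal fst) in H0|apply (f_equal snd) in H0];
    simpl in H0; lra.
Qed.

(** * Conjugating A by the weight e^{-x} x^alpha *)

Lemma derivable_pt_lim_comp_scal_ln g l c y :
  0 < y -> derivable_pt_lim g (c * ln y) l ->
  derivable_pt_lim (fun t => g (c * ln t)) y (l * (c * / y)).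
Proof.
  intros Hy Hg.
  exact (derivable_pt_lim_comp (fun t => c * ln t) g y (c * / y) l
           (derivable_pt_lim_scal ln c y (/ y) (derivable_pt_lim_ln y Hy)) Hg).
Qed.

Lemma Cderivable_lim_Cpowr a y :
  0 < y -> Cderivable_lim (fun t => Cpowr t a) y (Cmul (Cmul a (RtoC (/ y))) (Cpowr y a)).
Proof.
  intro Hy; unfold Cpowr; split; simpl.
  - pose proof (derivable_pt_lim_mult _ _ _ _ _
      (derivable_pt_lim_comp_scal_ln exp _ (fst a) y Hy (derivable_pt_lim_exp _))
      (derivable_pt_lim_comp_scal_ln cos _ (snd a) y Hy (derivable_pt_lim_cos _))) as D.
    match goal with |- derivable_pt_lim _ _ ?l => replace l with
      (exp (fst a * ln y) * (fst a * / y) * cos (snd a * ln y) +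
       exp (fst a * ln y) * (- sin (snd a * ln y) * (snd a * / y))) by ring end.
    exact D.
  - pose proof (derivable_pt_lim_mult _ _ _ _ _
      (derivable_pt_lim_comp_scal_ln exp _ (fst a) y Hy (derivable_pt_lim_exp _))
      (derivable_pt_lim_comp_scal_ln sin _ (snd a) y Hy (derivable_pt_lim_sin _))) as D.
    match goal with |- derivable_pt_lim _ _ ?l => replace l with
      (exp (fst a * ln y) * (fst a * / y) * sin (snd a * ln y) +
       exp (fst a * ln y) * (cos (snd a * ln y) * (snd a * / y))) by ring end.
    exact D.
Qed.

Lemma derivable_pt_lim_exp_opp y : derivable_pt_lim (fun t => exp (- t)) y (- exp (- y)).
Proof.
  pose proof (derivable_pt_lim_comp (fun t => - t) exp y (-1) (exp (- y))
     (derivable_pt_lim_opp id y 1 (derivable_pt_lim_id y)) (derivable_pt_lim_exp _)) as D.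
  replace (- exp (- y)) with (exp (- y) * -1) by ring; exact D.
Qed.

Lemma derivable_pt_lim_Rinv y : y <> 0 -> derivable_pt_lim (fun t => / t) y (- / (y * y)).
Proof.
  intro Hy.
  pose proof (derivable_pt_lim_div (fct_cte 1) id y 0 1
    (derivable_pt_lim_const 1 y) (derivable_pt_lim_id y) Hy) as D.
  eapply derivable_pt_lim_ext; [intro t; unfold div_fct, fct_cte, Rdiv; apply Rmult_1_l|].
  replace (- / (y * y)) with ((0 * id y - 1 * fct_cte 1 y) / (id y)²)
    by (unfold id, fct_cte, Rsqr; field; assumption).
  exact D.
Qed.

Section Weight.
Variable a : Cplx.

Definition weight (t : R) : Cplx := Cmul (RtoC (exp (- t))) (Cpowr t a).

Definition weight_logderiv (t : R) : Cplx := Csub (Cmul a (RtoC (/ t))) Cone.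

Lemma Cderivable_lim_weight y :
  0 < y -> Cderivable_lim weight y (Cmul (weight y) (weight_logderiv y)).
Proof.
  intro Hy.
  eapply Cderivable_lim_ext; [intro; reflexivity| |apply (Cderivable_lim_mul _ _ _ _ _
    (Cderivable_lim_RtoC _ _ _ (derivable_pt_lim_exp_opp y)) (Cderivable_lim_Cpowr a y Hy))].
  unfold weight, weight_logderiv; generalize (Cpowr y a); intro c; Cring.
Qed.

Lemma Cderivable_lim_weight_logderiv y :
  0 < y -> Cderivable_lim weight_logderiv y (Cmul a (RtoC (- / (y * y)))).
Proof.
  intro Hy.
  eapply Cderivable_lim_ext; [intro; reflexivity| |apply (Cderivable_lim_add _ _ _ _ _
    (Cderivable_lim_mul _ _ _ _ _ (Cderivable_lim_const a y)
       (Cderivable_lim_RtoC _ _ _ (derivable_pt_lim_Rinv y (Rgt_not_eq _ _ Hy))))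
    (Cderivable_lim_const (Copp Cone) y))].
  Cring.
Qed.

Lemma Cderivable_lim_weight_mul H l y :
  0 < y -> Cderivable_lim H y l ->
  Cderivable_lim (fun t => Cmul (weight t) (H t)) y
    (Cmul (weight y) (Cadd (Cmul (weight_logderiv y) (H y)) l)).
Proof.
  intros Hy HH.
  eapply Cderivable_lim_ext; [intro; reflexivity| |
    apply (Cderivable_lim_mul _ _ _ _ _ (Cderivable_lim_weight y Hy) HH)].
  generalize (weight y) (weight_logderiv y) (H y); intros; Cring.
Qed.

End Weight.

Lemma Aop_eq_on_pos F G x :
  (forall y, 0 < y -> F y = G y) -> 0 < x -> Aop F x = Aop G x.
Proof.
  intros HFG Hx; unfold Aop.
  rewrite (HFG x Hx), (Cderiv_eq_on_pos F G x HFG Hx).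
  rewrite (Cderiv_eq_on_pos (Cderiv F) (Cderiv G) x); [reflexivity| |assumption].
  intros y Hy; apply Cderiv_eq_on_pos; assumption.
Qed.

Lemma Aop_weight_Pfun a P x :
  0 < x -> Aop (fun t => Cmul (weight a t) (Pfun P t)) x =
           Copp (Cmul (weight a x) (Pfun (Pstep a P) x)).
Proof.
  intro Hx.
  assert (D1 : forall y, 0 < y ->
    Cderiv (fun t => Cmul (weight a t) (Pfun P t)) y =
    Cmul (weight a y) (Cadd (Cmul (weight_logderiv a y) (Pfun P y)) (Pfun (Pder P) y))).
  { intros y Hy; apply Cderiv_eq, Cderivable_lim_weight_mul, Cderivable_lim_Pfun; assumption. }
  unfold Aop; rewrite (Cderiv_eq_on_pos _ _ x D1 Hx), D1 by assumption.
  erewrite Cderiv_eq by (apply Cderivable_lim_weight_mul; [assumption|];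
    apply Cderivable_lim_add; [apply Cderivable_lim_mul;
      [apply Cderivable_lim_weight_logderiv, Hx|]|]; apply Cderivable_lim_Pfun).
  unfold Pfun, weight_logderiv; rewrite Peval_Pstep.
  generalize (weight a x) (Peval P (RtoC x)) (Peval (Pder P) (RtoC x))
    (Peval (Pder (Pder P)) (RtoC x)); intros.
  apply Cplx_ext; simpl; field; lra.
Qed.

Lemma Aiter_weight a n y :
  0 < y -> Aiter n (weight a) y = Cmul (RtoC ((-1) ^ n)) (Cmul (weight a y) (Pfun (Ppn a n) y)).
Proof.
  revert y; induction n as [|n IH]; intros y Hy.
  - unfold Pfun; simpl; rewrite Peval_cons, Peval_nil.
    generalize (weight a y); intro; Cring.
  - change (Aiter (S n) (weight a) y) with (Aop (Aiter n (weight a)) y).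
    rewrite (Aop_eq_on_pos _ (fun t => Cmul (weight a t)
                                     (Pfun (Pscale (RtoC ((-1) ^ n)) (Ppn a n)) t)) y).
    + rewrite Aop_weight_Pfun by assumption; unfold Pfun.
      rewrite Peval_Pstep_Pscale, Ppn_S.
      generalize (weight a y) (Peval (Pstep a (Ppn a n)) (RtoC y)); intros; Cring.
    + intros t Ht; rewrite IH by assumption; unfold Pfun; rewrite Peval_Pscale.
      generalize (weight a t) (Peval (Ppn a n) (RtoC t)); intros; Cring.
    + assumption.
Qed.

Lemma Cpowr_opp_mul x a : Cmul (Cpowr x (Copp a)) (Cpowr x a) = Cone.
Proof.
  unfold Cpowr; simpl.
  replace (- fst a * ln x) with (- (fst a * ln x)) by ring.
  replace (- snd a * ln x) with (- (snd a * ln x)) by ring.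
  rewrite exp_Ropp, cos_neg, sin_neg.
  pose proof (exp_pos (fst a * ln x)); pose proof (sin2_cos2 (snd a * ln x)).
  unfold Rsqr in *; apply Cplx_ext; simpl; field_simplify; try lra; nra.
Qed.

Lemma pn_Ppn a n x : 0 < x -> pn n a x = Pfun (Ppn a n) x.
Proof.
  intro Hx; unfold pn; fold (weight a); rewrite Aiter_weight by assumption; unfold weight.
  assert (Hexp : exp x * exp (- x) = 1) by (rewrite <- exp_plus, Rplus_opp_r; apply exp_0).
  assert (Hsign : (-1) ^ n * (-1) ^ n = 1)
    by (rewrite <- Rpow_mult_distr; replace (-1 * -1) with 1 by ring; apply pow1).
  pose proof (Cpowr_opp_mul x a) as Hpow.
  revert Hexp Hsign Hpow.
  generalize (exp x) (exp (- x)) ((-1) ^ n) (Cpowr x (Copp a)) (Cpowr x a) (Pfun (Ppn a n) x).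
  intros e e' s u v p Hexp Hsign Hpow.
  transitivity (Cmul (RtoC ((s * s) * (e * e'))) (Cmul (Cmul u v) p)); [Cring|].
  rewrite Hpow, Hexp, Hsign; Cring.
Qed.

Theorem lemma2p1 (alpha : Cplx) (Halpha : fst alpha > - (1 / 2)) :
  forall n : nat,
    (* p_n(.;alpha) is a polynomial of exact degree n on x > 0 *)
    (exists P : list Cplx, Pdeg_exact P n /\
        forall x : R, 0 < x -> pn n alpha x = Peval P (RtoC x))
    (* (i) *)
    /\ (forall x : R, 0 < x ->
          pn (S n) alpha x =
          Csub (Csub
            (Cmul (RtoC (x ^ 2)) (Cderiv (Cderiv (pn n alpha)) x))
            (Cmul (Cmul (RtoC x)
                     (Csub (RtoC (2 * x - 1)) (Cmul (RtoC 2) alpha)))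
                  (Cderiv (pn n alpha) x)))
            (Cmul (Csub (Cmul (Cadd (Cmul (RtoC 2) alpha) Cone) (RtoC x))
                        (Cpow alpha 2))
                  (pn n alpha x)))
    (* (ii) *)
    /\ (forall x : R, 0 < x ->
          Cmul (Cmul (Cadd (Cmul (RtoC 2) alpha) Cone) (RtoC x))
               (pn n (Cadd alpha Cone) x) =
          Cadd (Copp (pn (S n) alpha x)) (Cmul (Cpow alpha 2) (pn n alpha x)))
    (* (iii) value at 0 of the polynomial p_n *)
    /\ (forall P : list Cplx,
          (forall x : R, 0 < x -> pn n alpha x = Peval P (RtoC x)) ->
          Peval P Czero = Cpow alpha (2 * n))
    (* (iv) leading term *)
    /\ (exists a : list Cplx, (length a <= n)%nat /\
          forall x : R, 0 < x ->
            pn n alpha x =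
            Cadd (Cmul (Cmul (Cpow (RtoC (-2)) n)
                             (poch (Cadd alpha (RtoC (1 / 2))) n))
                       (Cpow (RtoC x) n))
                 (Peval a (RtoC x))).
Proof.
  intro n.
  assert (Hpn : forall x, 0 < x -> pn n alpha x = Pfun (Ppn alpha n) x)
    by (intros; apply pn_Ppn; assumption).
  assert (Hne : Ppn alpha n <> [])
    by (intro E; pose proof (length_Ppn alpha n) as L; rewrite E in L; discriminate).
  assert (Hlead : last (Ppn alpha n) Czero <> Czero).
  { rewrite last_Ppn; apply Cmul_neq0.
    - apply Cpow_neq0, Cneq0_fst; simpl; lra.
    - apply poch_neq0; simpl; lra. }
  split; [|split; [|split; [|split]]].
  - exists (Ppn alpha n); split; [split; [apply length_Ppn|exact Hlead]|exact Hpn].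
  - intros x Hx.
    assert (Hd : forall y, 0 < y -> Cderiv (pn n alpha) y = Pfun (Pder (Ppn alpha n)) y)
      by (intros; apply Cderiv_eq_on_pos_Pfun; assumption).
    rewrite (Cderiv_eq_on_pos_Pfun _ _ x Hd Hx), Hd, pn_Ppn, Hpn, Ppn_S by assumption.
    unfold Pfun; rewrite Peval_Pstep; simpl Cpow.
    generalize (Peval (Ppn alpha n) (RtoC x)) (Peval (Pder (Ppn alpha n)) (RtoC x))
      (Peval (Pder (Pder (Ppn alpha n))) (RtoC x)); intros; Cring.
  - intros x Hx; rewrite !pn_Ppn, Ppn_shift by assumption; simpl Cpow.
    generalize (Pfun (Ppn alpha (S n)) x) (Pfun (Ppn alpha n) x); intros; Cring.
  - intros P HP; rewrite <- (Peval_at0_eq_on_pos (Ppn alpha n) P), Ppn_at0; [reflexivity|].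
    intros x Hx; rewrite <- Hpn by assumption; apply HP; assumption.
  - exists (removelast (Ppn alpha n)); split.
    + rewrite length_removelast, length_Ppn; lia.
    + intros x Hx; rewrite Hpn by assumption; unfold Pfun.
      rewrite Peval_split_last, last_Ppn, length_Ppn by assumption.
      replace (S n - 1)%nat with n by lia; reflexivity.
Qed.
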